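(* Let $k_1,k_2,m$ be nonnegative integers with $k_1\le k_2$ and $k_1+k_2-m\le\dim V$. Let $Y_1\in\mathcal H_{k_1-m}$ and $X_2\in\mathcal H_{k_2}$ be subspaces whose intersection is a single point. Then the following are equivalent: (i) $Y_1\perp^{*}X_2$ (equivalently, $Y_1\perp_x X_2$); (ii) $X_1\perp^{*}X_2$ for every $X_1\in\mathcal H_{k_1}$ such that $Y_1\subset X_1$ and $\dim(X_1\cap X_2)=m$.
   Context: Let $V$ be a vector space over a field with a nondegenerate symmetric bilinear form $\xi$ having no isotropic vectors. Points are elements of $V$; (affine) subspaces are sets $p+W$ with $W$ a linear subspace, of dimension $\dim W$. $\mathcal H_k$ denotes the family of $k$-dimensional subspaces. $X_1\sqcup X_2$ denotes the least subspace containing $X_1\cup X_2$. For nonempty subspaces $X,Y$: $X\perp Y$ iff $\xi(b-a,d-c)=0$ for all $a,b\in X$, $c,d\in Y$; $X\perp_x Y$ iff $X\perp Y$ and $X\cap Y\neq\emptyset$. $X_1\perp^{\circ}X_2$ iff there are a point $q\in X_1\cap X_2$ and subspaces $Z_1,Z_2$ with $q\in Z_1,Z_2$, $Z_i\perp_x X_1\cap X_2$, $Z_1\perp_x Z_2$, and $(X_1\cap X_2)\sqcup Z_i=X_i$ for $i=1,2$. $X_1\perp^{*}X_2$ iff $X_1\perp^{\circ}X_2$ and $X_1\cap X_2$ is different from both $X_1$ and $X_2$. *)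

From HB Require Import structures.
From mathcomp Require Import all_boot all_order all_algebra.
From mathcomp Require Export classical_sets.
Set Implicit Arguments. Unset Strict Implicit. Unset Printing Implicit Defensive.
Import GRing.Theory.
Local Open Scope ring_scope.
Local Open Scope classical_set_scope.

Section Defs.
Variables (F : fieldType) (V : lmodType F).

Definition lspan (s : seq V) : set V :=
  [set v | exists c : 'I_(size s) -> F, v = \sum_(i < size s) c i *: s`_i].

Definition lfree (s : seq V) : Prop :=
  forall c : 'I_(size s) -> F,
    \sum_(i < size s) c i *: s`_i = 0 -> forall i, c i = 0.

Definition lsubspace (W : set V) : Prop :=
  W 0 /\ (forall u v, W u -> W v -> W (u + v)) /\
  (forall a v, W v -> W (a *: v)).

Definition asubspace (X : set V) : Prop :=
  exists p W, lsubspace W /\ X = [set p + w | w in W].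

Definition Hk (k : nat) (X : set V) : Prop :=
  exists p (s : seq V), size s = k /\ lfree s /\ X = [set p + w | w in lspan s].

Definition dim_ge (n : nat) : Prop := exists s : seq V, size s = n /\ lfree s.

Definition ajoin (X1 X2 : set V) : set V :=
  [set v | forall Y, asubspace Y -> X1 `|` X2 `<=` Y -> Y v].

Variable xi : V -> V -> F.

Definition perp (X Y : set V) : Prop :=
  forall a b c d, X a -> X b -> Y c -> Y d -> xi (b - a) (d - c) = 0.

Definition perp_x (X Y : set V) : Prop := perp X Y /\ X `&` Y !=set0.

Definition perp_o (X1 X2 : set V) : Prop :=
  exists q, (X1 `&` X2) q /\
  exists Z1 Z2, [/\ asubspace Z1, asubspace Z2, Z1 q & Z2 q] /\
    [/\ perp_x Z1 (X1 `&` X2), perp_x Z2 (X1 `&` X2), perp_x Z1 Z2,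
        ajoin (X1 `&` X2) Z1 = X1 & ajoin (X1 `&` X2) Z2 = X2].

Definition perp_star (X1 X2 : set V) : Prop :=
  [/\ perp_o X1 X2, X1 `&` X2 <> X1 & X1 `&` X2 <> X2].

End Defs.

From HB Require Import structures.
From mathcomp Require Import all_boot all_order all_algebra.
From mathcomp Require Import boolp classical_sets.
From mathcomp Require Import zify.
Import GRing.Theory.
Local Open Scope ring_scope.
Local Open Scope classical_set_scope.
Set Implicit Arguments. Unset Strict Implicit.

(* Since Y1 and X2 meet in a single point p, the relation Y1 ⊥* X2
   just says that the directions of Y1 and X2 are orthogonal (and nonzero).  Write
   X1 = p + W1, X2 = p + W2 and T = W1 ∩ W2.
   (i) => (ii): a dimension count gives W1 = T + dir Y1, and dir Y1 ⊥ W2, so Y1 and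
   p + (W2 ∩ T^⊥) witness X1 ⊥° X2; the latter complements T in W2 because the
   form is anisotropic, so that orthogonal projection onto T exists.
   (ii) => (i): for each basis vector e_i of W2, extend Y1 by m basis vectors of W2
   other than e_i.  The complement of T in W1 provided by X1 ⊥° X2 is orthogonal
   to W2, so the orthogonal projection onto W2 of any u ∈ dir Y1 lies in T and has
   vanishing i-th coordinate.  Hence the projection is 0, i.e. u ⊥ W2.  When
   k1 = m, the extension X1 meets X2 in all of X1, so both sides fail. *)

Section Subspaces.
Variables (F : fieldType) (V : lmodType F).
Implicit Types (A B C L W : set V) (u v w : V).

Lemma lsubspace0 W : lsubspace W -> W 0.
Proof. by case. Qed.

Lemma lsubspaceD W u v : lsubspace W -> W u -> W v -> W (u + v).
Proof. by case=> _ [+ _]; apply. Qed.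

Lemma lsubspaceZ W a v : lsubspace W -> W v -> W (a *: v).
Proof. by case=> _ [_]; apply. Qed.

Lemma lsubspaceN W v : lsubspace W -> W v -> W (- v).
Proof. by move=> W_lsub Wv; rewrite -scaleN1r; apply: lsubspaceZ. Qed.

Lemma lsubspaceB W u v : lsubspace W -> W u -> W v -> W (u - v).
Proof.
by move=> W_lsub Wu Wv; apply: lsubspaceD => //; apply: lsubspaceN.
Qed.

Lemma lsubspaceI W1 W2 :
  lsubspace W1 -> lsubspace W2 -> lsubspace (W1 `&` W2).
Proof.
move=> W1_lsub W2_lsub; split; first by split; apply: lsubspace0.
by split=> [u v [? ?] [? ?]|a v [? ?]]; split;
  (apply: lsubspaceD || apply: lsubspaceZ).
Qed.

Definition sumset (A B : set V) : set V := [set u + w | u in A & w in B].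

Lemma sumset_lsubspace L1 L2 :
  lsubspace L1 -> lsubspace L2 -> lsubspace (sumset L1 L2).
Proof.
move=> lL1 lL2; split.
  by exists 0; [apply: lsubspace0|exists 0; rewrite ?addr0 //; apply: lsubspace0].
split=> [_ _ [u1 L1u1 [w1 L2w1 <-]] [u2 L1u2 [w2 L2w2 <-]] | a _ [u L1u [w L2w <-]]].
  exists (u1 + u2); first exact: lsubspaceD.
  by exists (w1 + w2); [apply: lsubspaceD|rewrite addrACA].
exists (a *: u); first exact: lsubspaceZ.
by exists (a *: w); [apply: lsubspaceZ|rewrite scalerDr].
Qed.

Lemma sumset_subl L1 L2 : lsubspace L2 -> L1 `<=` sumset L1 L2.
Proof.
by move=> lL2 u L1u; exists u => //; exists 0; [apply: lsubspace0|rewrite addr0].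
Qed.

Lemma sumset_subr L1 L2 : lsubspace L1 -> L2 `<=` sumset L1 L2.
Proof. by move=> lL1 w L2w; exists 0; [apply: lsubspace0|exists w; rewrite ?add0r]. Qed.

Lemma sumset_sub L1 L2 W :
  lsubspace W -> L1 `<=` W -> L2 `<=` W -> sumset L1 L2 `<=` W.
Proof. by move=> lW sub1 sub2 _ [u /sub1 Wu [w /sub2 Ww <-]]; apply: lsubspaceD. Qed.

Lemma sumsetI_absorb A B C : lsubspace A -> lsubspace C -> B `<=` C ->
  (forall v, A v -> C v -> v = 0) -> sumset A B `&` C = B.
Proof.
move=> lA lC BC AC0; apply/seteqP; split=> [_ [[a Aa [b Bb <-]] Cab]|b Bb].
  suff -> : a = 0 by rewrite add0r.
  by apply: AC0 => //; rewrite -(addrK b a); apply: lsubspaceB => //; apply: BC.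
by split; [exists 0; [apply: lsubspace0|exists b; rewrite ?add0r]|apply: BC].
Qed.

End Subspaces.

Section NatSpan.
Variables (F : fieldType) (V : lmodType F).
Implicit Types (s t : seq V) (u v w : V).

(* Coefficient families are indexed by [nat] rather than ['I_(size s)], so that
   families can be concatenated and reindexed without dependent casts; the
   coefficients beyond [size s] are irrelevant. *)
Definition nspan s : set V :=
  [set v | exists c : nat -> F, v = \sum_(i < size s) c i *: s`_i].

Definition nfree s : Prop :=
  forall c : nat -> F, \sum_(i < size s) c i *: s`_i = 0 ->
    forall i, (i < size s)%N -> c i = 0.

Definition ord_ext n (c : 'I_n -> F) (k : nat) : F := odflt 0 (omap c (insub k)).

Lemma ord_extE n (c : 'I_n -> F) (i : 'I_n) : ord_ext c i = c i.
Proof. by rewrite /ord_ext valK. Qed.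

Lemma lspan_nspan s : lspan s = nspan s.
Proof.
rewrite predeqE => v; split=> [[c ->]|[c ->]]; last by exists (fun i => c (val i)).
by exists (ord_ext c); apply: eq_bigr => i _; rewrite ord_extE.
Qed.

Lemma lfree_nfree s : lfree s <-> nfree s.
Proof.
split=> [sfree c c0 i lt_i_s | sfree c c0 i].
  exact: (sfree (fun j => c (val j)) c0 (Ordinal lt_i_s)).
rewrite -ord_extE; apply: sfree (ltn_ord i).
by rewrite -[RHS]c0; apply: eq_bigr => j _; rewrite ord_extE.
Qed.

Lemma nspan_lsubspace s : lsubspace (nspan s).
Proof.
split; first by exists (fun=> 0); rewrite big1 // => i _; rewrite scale0r.
split=> [_ _ [c ->] [d ->] | a _ [c ->]].
  exists (fun i => c i + d i).
  by rewrite -big_split; apply: eq_bigr => i _; rewrite scalerDl.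
exists (fun i => a * c i).
by rewrite scaler_sumr; apply: eq_bigr => i _; rewrite scalerA.
Qed.

Lemma sum_delta s i : (i < size s)%N ->
  \sum_(j < size s) (j == i :> nat)%:R *: s`_j = s`_i.
Proof.
move=> lt_i_s; rewrite (bigD1 (Ordinal lt_i_s)) //= eqxx scale1r big1 ?addr0 //.
move=> j /eqP ne_j_i; suff -> : (j == i :> nat) = false by rewrite scale0r.
by apply/negbTE/eqP => eji; apply: ne_j_i; apply: val_inj.
Qed.

Lemma nspan_nth s i : (i < size s)%N -> nspan s s`_i.
Proof. by move=> lt_i_s; exists (fun j => (j == i)%:R); rewrite sum_delta. Qed.

Lemma nspan_nil v : nspan [::] v -> v = 0.
Proof. by move=> [c ->]; rewrite big_ord0. Qed.

Lemma nfree_nth_neq0 s i : nfree s -> (i < size s)%N -> s`_i != 0.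
Proof.
move=> sfree lt_i_s; apply/eqP => si0.
suff /eqP : (1 : F) = 0 by rewrite oner_eq0.
have := sfree (fun j => (j == i)%:R) _ i lt_i_s; rewrite eqxx; apply.
by rewrite sum_delta.
Qed.

Lemma nfree_coord s (c d : nat -> F) : nfree s ->
  \sum_(i < size s) c i *: s`_i = \sum_(i < size s) d i *: s`_i ->
  forall i, (i < size s)%N -> c i = d i.
Proof.
move=> sfree ecd i lt_i_s; apply/eqP; rewrite -subr_eq0; apply/eqP.
apply: (sfree (fun j => c j - d j)) lt_i_s.
under eq_bigr do rewrite scalerBl.
by rewrite sumrB ecd subrr.
Qed.

Lemma nspan_row s (r : 'rV_(size s)) : nspan s (\sum_(j < size s) r 0 j *: s`_j).
Proof. by exists (ord_ext (r 0)); apply: eq_bigr => j _; rewrite ord_extE. Qed.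

Lemma nfree_row s (r : 'rV_(size s)) :
  nfree s -> \sum_(j < size s) r 0 j *: s`_j = 0 -> r = 0.
Proof.
move=> sfree r0; apply/rowP => j; rewrite mxE -ord_extE.
apply: (sfree _ _ _ (ltn_ord j)); rewrite -[RHS]r0.
by apply: eq_bigr => k _; rewrite ord_extE.
Qed.

Lemma sum_cat_coef s t (c : nat -> F) :
  \sum_(i < size (s ++ t)) c i *: (s ++ t)`_i =
  \sum_(i < size s) c i *: s`_i + \sum_(i < size t) c (size s + i)%N *: t`_i.
Proof.
rewrite size_cat big_split_ord /=; congr (_ + _); apply: eq_bigr => i _.
  by rewrite nth_cat ltn_ord.
by rewrite nth_cat ltnNge leq_addr addKn.
Qed.

Lemma nspan_cat s t : nspan (s ++ t) = sumset (nspan s) (nspan t).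
Proof.
rewrite predeqE => v; split=> [[c ->]|[_ [c ->] [_ [d ->] <-]]].
  rewrite sum_cat_coef; exists (\sum_(i < size s) c i *: s`_i); first by exists c.
  exists (\sum_(i < size t) c (size s + i)%N *: t`_i) => //.
  by exists (fun i => c (size s + i)%N).
pose e i := if (i < size s)%N then c i else d (i - size s)%N.
exists e; rewrite sum_cat_coef; congr (_ + _); apply: eq_bigr => i _.
  by rewrite /e ltn_ord.
by rewrite /e ltnNge leq_addr addKn.
Qed.

Lemma nfree_cat s t : nfree s -> nfree t ->
  (forall v, nspan s v -> nspan t v -> v = 0) -> nfree (s ++ t).
Proof.
move=> sfree tfree st0 c; rewrite sum_cat_coef => c0 i.
set a := \sum_(i < size s) _ in c0; set b := \sum_(i < size t) _ in c0.
have /eqP ab : a == - b by rewrite -addr_eq0 c0.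
have a0 : a = 0.
  apply: st0; first by exists c.
  rewrite ab; apply: (lsubspaceN (nspan_lsubspace t)).
  by exists (fun i => c (size s + i)%N).
have b0 : b = 0 by rewrite -c0 a0 add0r.
rewrite size_cat => lt_i_st; case: (ltnP i (size s)) => [lt_i_s|le_s_i].
  exact: sfree a0 _ lt_i_s.
rewrite -(subnKC le_s_i); apply: (tfree (fun j => c (size s + j)%N) b0).
by rewrite ltn_subLR.
Qed.

Lemma nspan_row_free s t : nfree t -> nspan t `<=` nspan s ->
  exists2 A : 'M[F]_(size t, size s), row_free A &
    forall r : 'rV_(size t),
      \sum_(j < size t) r 0 j *: t`_j = \sum_(i < size s) (r *m A) 0 i *: s`_i.
Proof.
move=> tfree t_s.
have [f tf] := choice (fun j : 'I_(size t) => t_s _ (nspan_nth (ltn_ord j))).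
pose A : 'M[F]_(size t, size s) := \matrix_(j, i) f j i.
have tA (r : 'rV_(size t)) :
    \sum_(j < size t) r 0 j *: t`_j = \sum_(i < size s) (r *m A) 0 i *: s`_i.
  under eq_bigr do rewrite tf scaler_sumr.
  rewrite exchange_big; apply: eq_bigr => i _ /=.
  by rewrite mxE scaler_suml; apply: eq_bigr => j _; rewrite mxE scalerA.
exists A => //; apply: inj_row_free => r rA0; apply: nfree_row tfree _.
by rewrite tA rA0 big1 // => i _; rewrite mxE scale0r.
Qed.

Lemma nfree_size_leq s t :
  nfree t -> nspan t `<=` nspan s -> (size t <= size s)%N.
Proof.
move=> tfree t_s; have [A /eqP rkA _] := nspan_row_free tfree t_s.
by rewrite -rkA rank_leq_col.
Qed.

Lemma nfree_nspan_eq s t :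
  nfree t -> nspan t `<=` nspan s -> size t = size s -> nspan s `<=` nspan t.
Proof.
move=> tfree t_s ets v [b ->]; have [A /eqP rkA tA] := nspan_row_free tfree t_s.
have /row_fullP [B BA] : row_full A by rewrite /row_full rkA ets.
have := nspan_row ((\row_i b i) *m B); rewrite tA -mulmxA BA mulmx1.
by under eq_bigr do rewrite mxE.
Qed.

End NatSpan.

Section Subfamily.
Variables (F : fieldType) (V : lmodType F) (s : seq V) (f : nat -> nat) (m : nat).
Hypothesis f_lt : forall j, (j < m)%N -> (f j < size s)%N.

Definition subfamily := mkseq (fun j => s`_(f j)) m.

Lemma subfamily_sum (c : nat -> F) :
  \sum_(j < size subfamily) c j *: subfamily`_j =
  \sum_(l < size s) (\sum_(j < m | f j == l) c j) *: s`_l.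
Proof.
rewrite size_mkseq; under eq_bigr do rewrite nth_mkseq //.
under [RHS]eq_bigr do rewrite scaler_suml big_mkcond /=.
rewrite exchange_big /=; apply: eq_bigr => j _.
rewrite (bigD1 (Ordinal (f_lt (ltn_ord j)))) //= eqxx big1 ?addr0 // => l ne_l_fj.
by case: eqP => // fjl; case/eqP: ne_l_fj; apply: val_inj.
Qed.

Lemma nspan_subfamily v : nspan subfamily v ->
  exists2 e : nat -> F, v = \sum_(l < size s) e l *: s`_l &
    forall l, (forall j, (j < m)%N -> f j != l) -> e l = 0.
Proof.
move=> [c ->]; exists (fun l => \sum_(j < m | f j == l) c j); first exact: subfamily_sum.
by move=> l notf; rewrite big1 // => j /eqP fjl; case/eqP: (notf _ (ltn_ord j)).
Qed.

Lemma nspan_subfamily_sub : nspan subfamily `<=` nspan s.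
Proof. by move=> v /nspan_subfamily [e -> _]; exists e. Qed.

Lemma nfree_subfamily : nfree s -> injective f -> nfree subfamily.
Proof.
move=> sfree f_inj c c0 j; rewrite size_mkseq => lt_j_m.
rewrite subfamily_sum in c0.
have := sfree (fun l => \sum_(j < m | f j == l) c j) c0 _ (f_lt lt_j_m).
rewrite (bigD1 (Ordinal lt_j_m)) //= big1 ?addr0 // => k /andP [/eqP /f_inj fkj].
by case/eqP; apply: val_inj.
Qed.

End Subfamily.

Section Affine.
Variables (F : fieldType) (V : lmodType F).
Implicit Types (L W : set V) (p q u v w : V).

Definition translate p L : set V := [set p + w | w in L].

Lemma translateE p L v : translate p L v <-> L (v - p).
Proof.
split=> [[w Lw <-]|Lvp]; first by rewrite addrC addKr.
by exists (v - p) => //; rewrite addrC subrK.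
Qed.

Lemma translateDr p L w : translate p L (p + w) <-> L w.
Proof. by rewrite translateE addrC addKr. Qed.

Lemma translate_self p L : lsubspace L -> translate p L p.
Proof. by move=> lL; apply/translateE; rewrite subrr; apply: lsubspace0. Qed.

Lemma translate_rebase p q L :
  lsubspace L -> translate p L q -> translate p L = translate q L.
Proof.
move=> lL /translateE Lqp; rewrite predeqE => v; rewrite !translateE.
have -> : v - p = (v - q) + (q - p) by rewrite addrA subrK.
split=> [Lvp|Lvq]; last exact: lsubspaceD.
by have := lsubspaceB lL Lvp Lqp; rewrite addrK.
Qed.

Lemma translateI p L1 L2 :
  translate p L1 `&` translate p L2 = translate p (L1 `&` L2).
Proof.
rewrite predeqE => v; split=> [[/translateE L1v /translateE L2v]|/translateE [L1v L2v]].
  exact/translateE.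
by split; apply/translateE.
Qed.

Lemma translate_subset p L1 L2 : translate p L1 `<=` translate p L2 -> L1 `<=` L2.
Proof. by move=> sub12 w /(translateDr p) /sub12 /translateDr. Qed.

Lemma translate_inj p : injective (translate p).
Proof.
by move=> L1 L2 e12; apply/seteqP; split; apply: (@translate_subset p); rewrite e12.
Qed.

Lemma translate_point p L :
  lsubspace L -> translate p L = [set p] <-> (forall w, L w -> w = 0).
Proof.
move=> lL; split=> [Lp w Lw|L0].
  have : [set p] (p + w) by rewrite -Lp; apply/translateDr.
  by move=> /= /eqP; rewrite -subr_eq0 addrC addKr => /eqP.
rewrite predeqE => v; rewrite translateE; split=> [/L0 /eqP|->].
  by rewrite subr_eq0 => /eqP.
by rewrite subrr; apply: lsubspace0.
Qed.

Lemma asubspace_translate p L : lsubspace L -> asubspace (translate p L).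
Proof. by move=> lL; exists p, L. Qed.

Lemma asubspace_through Z q :
  asubspace Z -> Z q -> exists2 W, lsubspace W & Z = translate q W.
Proof. by move=> [p [W [lW ->]]] Zq; exists W => //; apply: translate_rebase. Qed.

Lemma ajoin_translate q L1 L2 : lsubspace L1 -> lsubspace L2 ->
  ajoin (translate q L1) (translate q L2) = translate q (sumset L1 L2).
Proof.
move=> lL1 lL2; apply/seteqP; split=> [v|v /translateE [u L1u [w L2w uw]] Y aY sub12].
  apply; first by apply/asubspace_translate/sumset_lsubspace.
  by move=> x [] /translateE Lx; apply/translateE;
    [apply: sumset_subl|apply: sumset_subr].
have Yq : Y q by apply: sub12; left; apply: translate_self.
have [W lW eY] := asubspace_through aY Yq; rewrite eY in sub12 *.
have [sub1 sub2] : L1 `<=` W /\ L2 `<=` W.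
  by split; apply: (@translate_subset q) => x Lx; apply: sub12; [left|right].
by apply/translateE; rewrite -uw; apply: lsubspaceD lW (sub1 _ L1u) (sub2 _ L2w).
Qed.

Lemma ajoin_point p Z : asubspace Z -> Z p -> ajoin [set p] Z = Z.
Proof.
move=> aZ Zp; apply/seteqP; split=> [v|v Zv Y _ sub]; last by apply: sub; right.
by apply; [|move=> x [-> //|]].
Qed.

Lemma translate_nspan_point p s :
  nfree s -> translate p (nspan s) = [set p] <-> s = [::].
Proof.
move=> sfree; rewrite (translate_point _ (nspan_lsubspace s)).
split=> [s0|-> w]; last exact: nspan_nil.
apply/eqP; rewrite -size_eq0 -leqn0 leqNgt; apply/negP => s_pos.
by move/eqP: (nfree_nth_neq0 sfree s_pos); apply; apply: s0; apply: nspan_nth.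
Qed.

Lemma Hk_translate p s : nfree s -> Hk (size s) (translate p (nspan s)).
Proof.
by move=> sfree; exists p, s; rewrite lspan_nspan; do 2?split=> //; apply/lfree_nfree.
Qed.

Lemma Hk_through k X p : Hk k X -> X p ->
  exists s : seq V, [/\ size s = k, nfree s & X = translate p (nspan s)].
Proof.
move=> [p0 [s [size_s [/lfree_nfree sfree]]]]; rewrite lspan_nspan => -> Xp.
by exists s; split=> //; apply: translate_rebase (nspan_lsubspace s) Xp.
Qed.

End Affine.

Section Orthogonality.
Variables (F : fieldType) (V : lmodType F) (xi : V -> V -> F).
Hypothesis xi_sym : forall u v, xi u v = xi v u.
Hypothesis xi_linl :
  forall (a : F) (u v w : V), xi (a *: u + v) w = a * xi u w + xi v w.
Hypothesis xi_aniso : forall u, xi u u = 0 -> u = 0.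
Implicit Types (s t : seq V) (u v w : V).

Lemma xiDl u v w : xi (u + v) w = xi u w + xi v w.
Proof. by rewrite -{1}[u]scale1r xi_linl mul1r. Qed.

Lemma xi0l w : xi 0 w = 0.
Proof.
have e := xiDl 0 0 w; rewrite addr0 in e.
by apply: (addrI (xi 0 w)); rewrite addr0 -e.
Qed.

Lemma xiZl a u w : xi (a *: u) w = a * xi u w.
Proof. by rewrite -[a *: u]addr0 xi_linl xi0l addr0. Qed.

Lemma xiBl u v w : xi (u - v) w = xi u w - xi v w.
Proof. by rewrite xiDl -scaleN1r xiZl mulN1r. Qed.

Lemma xiDr u v w : xi w (u + v) = xi w u + xi w v.
Proof. by rewrite !(xi_sym w) xiDl. Qed.

Lemma xi_suml I (r : seq I) (P : pred I) (g : I -> V) w :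
  xi (\sum_(i <- r | P i) g i) w = \sum_(i <- r | P i) xi (g i) w.
Proof. exact: (big_morph (xi^~ w) (fun x y => xiDl x y w) (xi0l w)). Qed.

Lemma xi_sumr I (r : seq I) (P : pred I) (g : I -> V) w :
  xi w (\sum_(i <- r | P i) g i) = \sum_(i <- r | P i) xi w (g i).
Proof. by rewrite xi_sym xi_suml; under eq_bigr do rewrite xi_sym. Qed.

Lemma orth_proj_exists t w : nfree t ->
  exists2 mu, nspan t mu & forall v, nspan t v -> xi (w - mu) v = 0.
Proof.
move=> tfree; pose G : 'M[F]_(size t) := \matrix_(i, j) xi t`_i t`_j.
have xiG (r : 'rV_(size t)) (j : 'I_(size t)) :
    xi (\sum_(i < size t) r 0 i *: t`_i) t`_j = (r *m G) 0 j.
  by rewrite xi_suml !mxE; apply: eq_bigr => i _; rewrite xiZl mxE.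
have G_unit : G \in unitmx.
  rewrite -row_free_unit; apply: inj_row_free => r rG0; apply: nfree_row tfree _.
  apply: xi_aniso; rewrite xi_sumr big1 // => j _.
  by rewrite xi_sym xiZl xi_sym xiG rG0 mxE mulr0.
pose c := \row_j xi w t`_j *m invmx G.
exists (\sum_(i < size t) c 0 i *: t`_i); first exact: nspan_row.
move=> _ [d ->]; rewrite xi_sumr big1 // => j _.
by rewrite xi_sym xiZl xi_sym xiBl xiG mulmxKV // mxE subrr mulr0.
Qed.

Lemma orth_proj_unique (W : set V) u mu1 mu2 : lsubspace W -> W mu1 -> W mu2 ->
  (forall w, W w -> xi (u - mu1) w = 0) ->
  (forall w, W w -> xi (u - mu2) w = 0) -> mu1 = mu2.
Proof.
move=> W_lsub W_mu1 W_mu2 mu1_orth mu2_orth.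
apply/eqP; rewrite -subr_eq0; apply/eqP/xi_aniso.
have W_d : W (mu1 - mu2) by apply: lsubspaceB.
have e : mu1 - mu2 = (u - mu2) - (u - mu1) by rewrite [RHS]addrC opprB addrA subrK.
by rewrite {1}e xiBl mu1_orth // mu2_orth // subrr.
Qed.

Lemma orth_of_coord_projections s u : nfree s ->
  (forall i, (i < size s)%N -> exists2 e : nat -> F, e i = 0 &
     forall w, nspan s w -> xi (u - \sum_(l < size s) e l *: s`_l) w = 0) ->
  forall w, nspan s w -> xi u w = 0.
Proof.
move=> sfree projs; have [mu [d mu_d] mu_orth] := orth_proj_exists u sfree.
suff mu0 : mu = 0 by rewrite -[u]subr0 -mu0.
rewrite mu_d big1 // => l _; have [e el0 e_orth] := projs l (ltn_ord l).
have mu_e : mu = \sum_(l < size s) e l *: s`_l.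
  apply: (orth_proj_unique (nspan_lsubspace s) _ _ mu_orth e_orth).
    by exists d.
  by exists e.
by rewrite (nfree_coord sfree (etrans (esym mu_d) mu_e) (ltn_ord l)) el0 scale0r.
Qed.

Definition lorth (A B : set V) := forall u w, A u -> B w -> xi u w = 0.

Lemma perp_translate p q L1 L2 : lsubspace L1 -> lsubspace L2 ->
  perp xi (translate p L1) (translate q L2) <-> lorth L1 L2.
Proof.
move=> lL1 lL2; split=> [perp12 u w L1u L2w | orth12 a b c d].
  have := perp12 _ _ _ _ (translate_self p lL1) (proj2 (translateDr _ _ _) L1u)
    (translate_self q lL2) (proj2 (translateDr _ _ _) L2w).
  by rewrite !(addrC p) !(addrC q) !addrK.
move=> /translateE L1a /translateE L1b /translateE L2c /translateE L2d.
have -> : b - a = (b - p) - (a - p) by rewrite opprB addrA subrK.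
have -> : d - c = (d - q) - (c - q) by rewrite opprB addrA subrK.
by apply: orth12; apply: lsubspaceB.
Qed.

Lemma perp_x_translate p L1 L2 : lsubspace L1 -> lsubspace L2 ->
  lorth L1 L2 -> perp_x xi (translate p L1) (translate p L2).
Proof.
move=> lL1 lL2 orth12; split; first exact/perp_translate.
by exists p; split; apply: translate_self.
Qed.

Lemma perp_star_point X1 X2 p : asubspace X1 -> asubspace X2 ->
  X1 `&` X2 = [set p] ->
  perp_star xi X1 X2 <-> [/\ perp xi X1 X2, X1 <> [set p] & X2 <> [set p]].
Proof.
move=> aX1 aX2 X12p; have [X1p X2p] : (X1 `&` X2) p by rewrite X12p.
rewrite /perp_star /perp_o X12p.
split=> [|[X12 ne1 ne2]].
  move=> [[q [/= qp [Z1 [Z2 [[aZ1 aZ2 Z1q Z2q] [_ _ [Z12 _] aj1 aj2]]]]]] ne1 ne2].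
  rewrite qp in Z1q Z2q; rewrite !ajoin_point // in aj1 aj2; subst Z1 Z2.
  by split=> // /esym; [apply: ne1|apply: ne2].
have perp_p X : X p -> perp_x xi X [set p].
  by move=> Xp; split=> [a b c d _ _ -> ->|]; [rewrite subrr xi_sym xi0l|exists p].
split; [|exact: nesym|exact: nesym].
exists p; split=> //; exists X1, X2; split=> //.
split; [exact: perp_p|exact: perp_p| |exact: ajoin_point|exact: ajoin_point].
by split=> //; exists p.
Qed.

Lemma perp_o_complement p W1 W2 : lsubspace W1 -> lsubspace W2 ->
  perp_o xi (translate p W1) (translate p W2) ->
  exists2 U, sumset (W1 `&` W2) U = W1 & lorth U W2.
Proof.
move=> lW1 lW2; rewrite /perp_o translateI.
move=> [q [Iq [Z1 [Z2 [[aZ1 aZ2 Z1q Z2q] [[oZ1 _] _ [oZ12 _] aj1 aj2]]]]]].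
have lI := lsubspaceI lW1 lW2.
have [U1 lU1 eZ1] := asubspace_through aZ1 Z1q.
have [U2 lU2 eZ2] := asubspace_through aZ2 Z2q.
have rebase L : lsubspace L -> W1 `&` W2 `<=` L -> translate p L = translate q L.
  move=> lL IL; apply: translate_rebase => //.
  by move/translateE: Iq => /IL /translateE.
rewrite (rebase _ lI (@subset_refl _ _)) in oZ1 aj1 aj2.
rewrite eZ1 in oZ1 aj1 oZ12; rewrite eZ2 in aj2 oZ12.
rewrite (rebase _ lW1 (@subIsetl _ _ _)) ajoin_translate // in aj1.
rewrite (rebase _ lW2 (@subIsetr _ _ _)) ajoin_translate // in aj2.
have {}aj1 := translate_inj aj1; have {}aj2 := translate_inj aj2.
move/perp_translate: oZ1 => /(_ lU1 lI) oU1I.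
move/perp_translate: oZ12 => /(_ lU1 lU2) oU12.
exists U1 => // z w U1z; rewrite -aj2 => -[a Ia [b U2b <-]].
by rewrite xiDr oU1I // oU12 // addr0.
Qed.

Lemma perp_o_of_complement p W1 W2 U t :
  lsubspace W1 -> lsubspace W2 -> lsubspace U -> nfree t ->
  W1 `&` W2 = nspan t -> sumset (nspan t) U = W1 -> lorth U W2 ->
  perp_o xi (translate p W1) (translate p W2).
Proof.
move=> lW1 lW2 lU tfree W12 eW1 oUW2.
have lT := nspan_lsubspace t; have TW2 : nspan t `<=` W2 by rewrite -W12 => ? [].
pose W2' := [set w | W2 w /\ forall v, nspan t v -> xi w v = 0].
have lW2' : lsubspace W2'.
  split; first by split=> [|v _]; [apply: lsubspace0|apply: xi0l].
  split=> [u w [W2u ou] [W2w ow]|a w [W2w ow]]; split.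
  - exact: lsubspaceD.
  - by move=> v tv; rewrite xiDl ou // ow // addr0.
  - exact: lsubspaceZ.
  - by move=> v tv; rewrite xiZl ow // mulr0.
rewrite /perp_o translateI W12; exists p; split; first exact: translate_self.
exists (translate p U), (translate p W2'); split.
  by split; (apply: asubspace_translate || apply: translate_self).
split; rewrite ?ajoin_translate //; try apply: perp_x_translate => //.
- by move=> u v Uu tv; apply: oUW2 => //; apply: TW2.
- by move=> w v [_ ow]; apply: ow.
- by move=> u w Uu [W2w _]; apply: oUW2.
- by rewrite eW1.
congr translate; apply/seteqP; split.
  by apply: sumset_sub => // w [].
move=> w W2w; have [mu tmu mu_orth] := orth_proj_exists w tfree.
exists mu => //; exists (w - mu); last by rewrite addrC subrK.
by split; [apply: lsubspaceB => //; apply: TW2|].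
Qed.

End Orthogonality.

Section Extensions.
Variables (F : fieldType) (V : lmodType F) (xi : V -> V -> F).
Hypothesis xi_sym : forall u v, xi u v = xi v u.
Hypothesis xi_linl :
  forall (a : F) (u v w : V), xi (a *: u + v) w = a * xi u w + xi v w.
Hypothesis xi_aniso : forall u, xi u u = 0 -> u = 0.
Variables (p : V) (y s2 : seq V) (k1 k2 m : nat).
Hypotheses (yfree : nfree y) (s2free : nfree s2).
Hypotheses (size_y : size y = (k1 - m)%N) (size_s2 : size s2 = k2).
Hypotheses (le_m_k1 : (m <= k1)%N) (le_k1_k2 : (k1 <= k2)%N).
Hypothesis YX2 : translate p (nspan y) `&` translate p (nspan s2) = [set p].

Let lY := nspan_lsubspace y.
Let lW2 := nspan_lsubspace s2.
Let perp_star_YX2 :=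
  perp_star_point xi_sym xi_linl (asubspace_translate p lY) (asubspace_translate p lW2) YX2.

Lemma nspan_meet0 v : nspan y v -> nspan s2 v -> v = 0.
Proof.
move=> yv W2v; move: YX2; rewrite translateI.
by move/(translate_point _ (lsubspaceI lY lW2)); apply.
Qed.

Lemma perp_star_extend : perp_star xi (translate p (nspan y)) (translate p (nspan s2)) ->
  forall X1, Hk k1 X1 -> translate p (nspan y) `<=` X1 ->
    Hk m (X1 `&` translate p (nspan s2)) ->
    perp_star xi X1 (translate p (nspan s2)).
Proof.
move/perp_star_YX2=> [/(perp_translate _ _ _ lY lW2) yW2 Ynp _] X1 hX1 YX1 hX12.
have y_pos : (0 < size y)%N.
  by rewrite lt0n size_eq0; apply/eqP => y0; apply: Ynp; apply/translate_nspan_point.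
have X1p : X1 p by apply: YX1; apply: translate_self.
have [s1 [size_s1 s1free eX1]] := Hk_through hX1 X1p.
have [t [size_t tfree eX12]] := Hk_through hX12 (conj X1p (translate_self p lW2)).
subst X1; rewrite translateI in eX12; have W12 := translate_inj eX12.
have lW1 := nspan_lsubspace s1; have yW1 := translate_subset YX1.
have [tW1 tW2] : nspan t `<=` nspan s1 /\ nspan t `<=` nspan s2.
  by rewrite -W12; split=> v [].
have eW1 : sumset (nspan t) (nspan y) = nspan s1.
  apply/seteqP; split; first exact: sumset_sub.
  rewrite -nspan_cat; apply: nfree_nspan_eq.
  - by apply: nfree_cat => // v /tW2 W2v yv; apply: nspan_meet0.
  - by rewrite nspan_cat; apply: sumset_sub.
  - by rewrite size_cat size_t size_y size_s1 subnKC.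
split; first exact: perp_o_of_complement lW1 lW2 lY tfree W12 eW1 yW2.
  rewrite translateI W12 => /translate_inj tW1_eq.
  move/eqP: (nfree_nth_neq0 yfree y_pos); apply.
  apply: nspan_meet0 (nspan_nth y_pos) _; apply: tW2; rewrite tW1_eq.
  exact/yW1/nspan_nth.
rewrite translateI W12 => /translate_inj tW2_eq.
have : (size (y ++ s2) <= size s1)%N.
  apply: nfree_size_leq.
    by apply: nfree_cat => // v yv W2v; apply: nspan_meet0.
  by rewrite nspan_cat -tW2_eq; apply: sumset_sub.
rewrite size_cat size_y size_s2 size_s1; lia.
Qed.

Lemma subfamily_extension f :
  injective f -> (forall j, (j < m)%N -> (f j < size s2)%N) ->
  [/\ Hk k1 (translate p (nspan (y ++ subfamily s2 f m))),
       translate p (nspan y) `<=` translate p (nspan (y ++ subfamily s2 f m)),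
       Hk m (translate p (nspan (y ++ subfamily s2 f m)) `&` translate p (nspan s2))
     & nspan (y ++ subfamily s2 f m) `&` nspan s2 = nspan (subfamily s2 f m)].
Proof.
move=> f_inj f_lt; set t := subfamily s2 f m.
have tW2 : nspan t `<=` nspan s2 := nspan_subfamily_sub f_lt.
have tfree : nfree t := nfree_subfamily f_lt s2free f_inj.
have eI : nspan (y ++ t) `&` nspan s2 = nspan t.
  by rewrite nspan_cat; apply: sumsetI_absorb => //; apply: nspan_meet0.
split=> //.
- have ytfree : nfree (y ++ t).
    by apply: nfree_cat => // v yv /tW2; apply: nspan_meet0.
  by have := Hk_translate p ytfree; rewrite size_cat size_y size_mkseq subnK.
- move=> v /translateE yv; apply/translateE; rewrite nspan_cat.
  exact: sumset_subl (nspan_lsubspace t) _ yv.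
- by rewrite translateI eI; have := Hk_translate p tfree; rewrite size_mkseq.
Qed.

Lemma perp_star_of_extensions :
  (forall X1, Hk k1 X1 -> translate p (nspan y) `<=` X1 ->
    Hk m (X1 `&` translate p (nspan s2)) ->
    perp_star xi X1 (translate p (nspan s2))) ->
  perp_star xi (translate p (nspan y)) (translate p (nspan s2)).
Proof.
move=> ext.
have [lt_m_k1|le_k1_m] := ltnP m k1; last first.
  have y0 : y = [::] by apply/size0nil; rewrite size_y; lia.
  have [hX1 YX1 hX12 eI] := subfamily_extension (@inj_id _) (fun j lt_j_m => ltac:(lia)).
  have [_ ne1 _] := ext _ hX1 YX1 hX12.
  by case: ne1; rewrite translateI eI y0.
have projs u : nspan y u -> forall i, (i < size s2)%N -> exists2 e : nat -> F, e i = 0 &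
    forall w, nspan s2 w -> xi (u - \sum_(l < size s2) e l *: s2`_l) w = 0.
  move=> yu i lt_i_s2.
  have bump_lt j : (j < m)%N -> (bump i j < size s2)%N.
    by rewrite size_s2 /bump; case: (i <= j)%N => /=; lia.
  have [hX1 YX1 hX12 eI] := subfamily_extension (can_inj (bumpK i)) bump_lt.
  have [perp_o_i _ _] := ext _ hX1 YX1 hX12.
  have [U eU oU] := perp_o_complement xi_sym xi_linl (nspan_lsubspace _) lW2 perp_o_i.
  have : nspan (y ++ subfamily s2 (bump i) m) u.
    by rewrite nspan_cat; apply: sumset_subl (nspan_lsubspace _) _ yu.
  rewrite -eU eI => -[mu /(nspan_subfamily bump_lt) [e mu_e e_i] [z Uz muz]].
  exists e; first by apply: e_i => j _; rewrite eq_sym neq_bump.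
  by move=> w W2w; rewrite -mu_e -muz addrC addKr; apply: oU.
have yW2 : lorth xi (nspan y) (nspan s2).
  move=> u w yu.
  exact: (orth_of_coord_projections xi_sym xi_linl xi_aniso s2free (projs u yu)).
apply/perp_star_YX2.
split; first exact/(perp_translate _ _ _ lY lW2).
  by move/translate_nspan_point => /(_ yfree) /eqP; rewrite -size_eq0 size_y; lia.
by move/translate_nspan_point => /(_ s2free) /eqP; rewrite -size_eq0 size_s2; lia.
Qed.

End Extensions.

Theorem lemma2p2 (F : fieldType) (V : lmodType F) (xi : V -> V -> F)
  (xi_sym : forall u v, xi u v = xi v u)
  (xi_linl : forall (a : F) (u v w : V), xi (a *: u + v) w = a * xi u w + xi v w)
  (xi_nondeg : forall u, (forall v, xi u v = 0) -> u = 0)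
  (xi_aniso : forall u, xi u u = 0 -> u = 0)
  (k1 k2 m : nat) (hmk1 : (m <= k1)%N) (hk : (k1 <= k2)%N)
  (hdim : dim_ge V (k1 + k2 - m))
  (Y1 X2 : set V) (hY1 : Hk (k1 - m) Y1) (hX2 : Hk k2 X2)
  (hpt : exists p, Y1 `&` X2 = [set p]) :
  perp_star xi Y1 X2 <->
  (forall X1 : set V, Hk k1 X1 -> Y1 `<=` X1 -> Hk m (X1 `&` X2) ->
     perp_star xi X1 X2).
Proof.
have [p Y1X2] := hpt; have [Y1p X2p] : (Y1 `&` X2) p by rewrite Y1X2.
have [y [size_y yfree eY1]] := Hk_through hY1 Y1p.
have [s2 [size_s2 s2free eX2]] := Hk_through hX2 X2p.
subst Y1 X2; split.
- exact: (perp_star_extend xi_sym xi_linl xi_aniso yfree s2free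
    size_y size_s2 hmk1 hk Y1X2).
- exact: (perp_star_of_extensions xi_sym xi_linl xi_aniso yfree s2free
    size_y size_s2 hmk1 hk Y1X2).
Qed.
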